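(* Let $\mu$ be a limit ordinal and let $\langle \mathcal B^\nu:\nu<\mu\rangle$ be a $\preceq$-increasing sequence of base-enumerations, $\mathcal B^\nu=\langle B^\nu_i:i<\xi^\nu\rangle$, generating topologies $\tau^\nu$ on sets $X^\nu$. Put $\xi^\mu=\sup_{\nu<\mu}\xi^\nu$ and, for $i<\xi^\mu$, $B^\mu_i=\bigcup\{B^\nu_i:\nu<\mu,\ i<\xi^\nu\}$. Then $\mathcal B^\mu=\langle B^\mu_i:i<\xi^\mu\rangle$ is a base-enumeration and $\mathcal B^\nu\preceq\mathcal B^\mu$ for each $\nu<\mu$. Moreover, if $\tau^\nu$ is Hausdorff for cofinally many $\nu<\mu$, then the topology $\tau^\mu$ generated by $\mathcal B^\mu$ is Hausdorff. Finally, if $\sigma<\mu$, $a\in X^\sigma$, $A\subseteq X^\sigma$ and $a\in\overline{A}^{\tau^\nu}$ for every $\nu$ with $\sigma<\nu<\mu$, then $a\in\overline{A}^{\tau^\mu}$.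
   Context: A base-enumeration is a sequence $\langle B_i:i<\xi\rangle$, for some ordinal $\xi$, such that $\{B_i:i<\xi\}$ is a base consisting of clopen sets for a (not necessarily Hausdorff) topology $\tau$ on some set $X$ (namely $X=\bigcup_i B_i$). For base-enumerations $\mathcal B^0=\langle B^0_i:i<\xi^0\rangle$ on $X^0$ and $\mathcal B^1=\langle B^1_i:i<\xi^1\rangle$ on $X^1$, write $\mathcal B^0\preceq\mathcal B^1$ iff (1) $X^0\subseteq X^1$ and $\xi^0\le\xi^1$; (2) $B^0_i=B^1_i\cap X^0$ for $i<\xi^0$; (3) for $i,j<\xi^0$, $B^0_i\subseteq B^0_j$ iff $B^1_i\subseteq B^1_j$; (4) for $i,j<\xi^0$, $B^0_i\cap B^0_j=\emptyset$ iff $B^1_i\cap B^1_j=\emptyset$. *)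

(* Sets are predicates T -> Prop. Ordinals are modelled as
   initial segments (downward-closed subsets) of an arbitrary well-ordered
   type of indices. *)
From Stdlib Require Import Classical.

Set Implicit Arguments.

Definition is_wellorder {A : Type} (lt : A -> A -> Prop) : Prop :=
  (forall x, ~ lt x x) /\
  (forall x y z, lt x y -> lt y z -> lt x z) /\
  (forall x y, lt x y \/ x = y \/ lt y x) /\
  well_founded lt.

Definition down_closed {A : Type} (lt : A -> A -> Prop) (xi : A -> Prop) : Prop :=
  forall i j, lt j i -> xi i -> xi j.

Definition is_limit {N : Type} (ltN : N -> N -> Prop) (mu : N) : Prop :=
  (exists nu, ltN nu mu) /\ (forall nu, ltN nu mu -> exists nu', ltN nu nu' /\ ltN nu' mu).

Definition carrier {I T : Type} (B : I -> T -> Prop) (xi : I -> Prop) : T -> Prop :=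
  fun x => exists i, xi i /\ B i x.

Definition is_topology {T : Type} (X : T -> Prop) (tau : (T -> Prop) -> Prop) : Prop :=
  (forall U, tau U -> forall x, U x -> X x) /\
  tau (fun _ => False) /\ tau X /\
  (forall F : (T -> Prop) -> Prop, (forall U, F U -> tau U) ->
     tau (fun x => exists U, F U /\ U x)) /\
  (forall U V, tau U -> tau V -> tau (fun x => U x /\ V x)).

Definition is_base_enum {I T : Type} (lt : I -> I -> Prop)
    (B : I -> T -> Prop) (xi : I -> Prop) : Prop :=
  down_closed lt xi /\
  exists tau, is_topology (carrier B xi) tau /\
    (forall i, xi i -> tau (B i) /\ tau (fun x => carrier B xi x /\ ~ B i x)) /\
    (forall U, tau U -> forall x, U x ->
        exists i, xi i /\ B i x /\ (forall y, B i y -> U y)).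

Definition gen_open {I T : Type} (B : I -> T -> Prop) (xi : I -> Prop)
    (U : T -> Prop) : Prop :=
  (forall x, U x -> carrier B xi x) /\
  (forall x, U x -> exists i, xi i /\ B i x /\ (forall y, B i y -> U y)).

Definition hausdorff {I T : Type} (B : I -> T -> Prop) (xi : I -> Prop) : Prop :=
  forall x y, carrier B xi x -> carrier B xi y -> x <> y ->
    exists U V, gen_open B xi U /\ gen_open B xi V /\ U x /\ V y /\
      (forall z, ~ (U z /\ V z)).

Definition in_closure {I T : Type} (B : I -> T -> Prop) (xi : I -> Prop)
    (A : T -> Prop) (a : T) : Prop :=
  carrier B xi a /\
  forall U, gen_open B xi U -> U a -> exists z, U z /\ A z.

Definition benum_le {I T : Type} (B0 : I -> T -> Prop) (xi0 : I -> Prop)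
    (B1 : I -> T -> Prop) (xi1 : I -> Prop) : Prop :=
  (forall x, carrier B0 xi0 x -> carrier B1 xi1 x) /\ (forall i, xi0 i -> xi1 i) /\
  (forall i, xi0 i -> forall x, B0 i x <-> (B1 i x /\ carrier B0 xi0 x)) /\
  (forall i j, xi0 i -> xi0 j ->
     ((forall x, B0 i x -> B0 j x) <-> (forall x, B1 i x -> B1 j x))) /\
  (forall i j, xi0 i -> xi0 j ->
     ((forall x, ~ (B0 i x /\ B0 j x)) <-> (forall x, ~ (B1 i x /\ B1 j x)))).

Definition lim_xi {N I : Type} (ltN : N -> N -> Prop) (mu : N)
    (xi : N -> I -> Prop) : I -> Prop :=
  fun i => exists nu, ltN nu mu /\ xi nu i.

Definition lim_B {N I T : Type} (ltN : N -> N -> Prop) (mu : N)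
    (B : N -> I -> T -> Prop) (xi : N -> I -> Prop) : I -> T -> Prop :=
  fun i x => exists nu, ltN nu mu /\ xi nu i /\ B nu i x.

(* Every statement about finitely many basic sets, or about finitely many
   points, of the limit is witnessed at a single stage nu < mu: the stages
   below mu are directed, each B^mu_i eventually agrees with B^nu_i on X^nu,
   and the relation ⪯ preserves inclusions and disjointness of basic sets.
   So the base axioms, the clopenness of the B^mu_i, the separation of two
   points and the density of A near a can all be read off at a suitable
   stage. *)
From Stdlib Require Import Relations.

Set Implicit Arguments.

Section GeneratedTopology.
Variables (I T : Type) (ltI : I -> I -> Prop) (B : I -> T -> Prop) (xi : I -> Prop).

Definition refines_intersections : Prop :=
  forall i j x, xi i -> xi j -> B i x -> B j x ->
    exists k, xi k /\ B k x /\ (forall y, B k y -> B i y /\ B j y).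

Lemma gen_open_B i : xi i -> gen_open B xi (B i).
Proof.
  intros Hi; split.
  - intros x Hx; exists i; auto.
  - intros x Hx; exists i; auto.
Qed.

Lemma gen_open_topology :
  refines_intersections -> is_topology (carrier B xi) (gen_open B xi).
Proof.
  intros Hinter; split; [|split; [|split; [|split]]].
  - intros U [HU _]; exact HU.
  - split; intros x [].
  - split; [auto|]. intros x [i [Hi Hx]].
    exists i; split; [|split]; auto. intros y Hy; exists i; auto.
  - intros F HF; split.
    + intros x [U [HU Hx]]. exact (proj1 (HF U HU) x Hx).
    + intros x [U [HU Hx]].
      destruct (proj2 (HF U HU) x Hx) as [i [Hi [Hix HiU]]].
      exists i; split; [|split]; auto. intros y Hy; exists U; auto.
  - intros U V [HU HUb] [_ HVb]; split.
    + intros x [Hx _]; auto.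
    + intros x [HxU HxV].
      destruct (HUb x HxU) as [i [Hi [Hix HiU]]].
      destruct (HVb x HxV) as [j [Hj [Hjx HjV]]].
      destruct (Hinter i j x Hi Hj Hix Hjx) as [k [Hk [Hkx Hkij]]].
      exists k; split; [|split]; auto.
      intros y Hy; split; [apply HiU | apply HjV]; apply Hkij; auto.
Qed.

Lemma is_base_enum_iff :
  is_base_enum ltI B xi <->
  down_closed ltI xi /\ refines_intersections /\
  (forall i, xi i -> gen_open B xi (fun x => carrier B xi x /\ ~ B i x)).
Proof.
  split.
  - intros [Hdown [tau [Htop [Hclopen Hbase]]]].
    destruct Htop as [Htau_sub [_ [_ [_ Htau_inter]]]].
    assert (Htau_gen : forall U, tau U -> gen_open B xi U).
    { intros U HU; split; [apply (Htau_sub U HU) | apply (Hbase U HU)]. }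
    split; [exact Hdown | split].
    + intros i j x Hi Hj Hix Hjx.
      apply (Hbase _ (Htau_inter _ _ (proj1 (Hclopen i Hi)) (proj1 (Hclopen j Hj))));
        auto.
    + intros i Hi; apply Htau_gen, (Hclopen i Hi).
  - intros [Hdown [Hinter Hcompl]]; split; [exact Hdown|].
    exists (gen_open B xi); split; [apply gen_open_topology; exact Hinter|].
    split.
    + intros i Hi; split; [apply gen_open_B | apply Hcompl]; exact Hi.
    + intros U [_ HU]; exact HU.
Qed.

End GeneratedTopology.

Section BenumLe.
Variables (I T : Type) (B0 B1 : I -> T -> Prop) (xi0 xi1 : I -> Prop).
Hypothesis le01 : benum_le B0 xi0 B1 xi1.

Lemma benum_le_carrier {x} : carrier B0 xi0 x -> carrier B1 xi1 x.
Proof. apply le01. Qed.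

Lemma benum_le_index {i} : xi0 i -> xi1 i.
Proof. apply le01. Qed.

Lemma benum_le_mem {i x} : xi0 i -> B0 i x -> B1 i x.
Proof. destruct le01 as [_ [_ [Hres _]]]; intros Hi Hx; apply (Hres i Hi x), Hx. Qed.

Lemma benum_le_restrict {i x} : xi0 i -> B1 i x -> carrier B0 xi0 x -> B0 i x.
Proof. destruct le01 as [_ [_ [Hres _]]]; intros Hi Hx Hc; apply (Hres i Hi x); auto. Qed.

Lemma benum_le_subset {i j} : xi0 i -> xi0 j ->
  (forall x, B0 i x -> B0 j x) -> forall {x}, B1 i x -> B1 j x.
Proof. destruct le01 as [_ [_ [_ [Hsub _]]]]; intros Hi Hj; apply Hsub; auto. Qed.

Lemma benum_le_disjoint {i j} : xi0 i -> xi0 j ->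
  (forall x, ~ (B0 i x /\ B0 j x)) -> forall {x}, ~ (B1 i x /\ B1 j x).
Proof. destruct le01 as [_ [_ [_ [_ Hdisj]]]]; intros Hi Hj; apply Hdisj; auto. Qed.

End BenumLe.

Lemma benum_le_refl (I T : Type) (B : I -> T -> Prop) (xi : I -> Prop) :
  benum_le B xi B xi.
Proof.
  split; [|split; [|split; [|split]]]; try tauto.
  intros i Hi x; split; [|tauto]. intros Hx; split; [|exists i]; auto.
Qed.

Lemma trichotomous_directed (N : Type) (lt : N -> N -> Prop) :
  (forall x y, lt x y \/ x = y \/ lt y x) ->
  forall a b, exists m, clos_refl N lt a m /\ clos_refl N lt b m /\ (m = a \/ m = b).
Proof.
  intros Htri a b; destruct (Htri a b) as [H | [<- | H]].
  - exists b; split; [apply r_step, H | split; [apply r_refl | right; reflexivity]].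
  - exists a; split; [apply r_refl | split; [apply r_refl | left; reflexivity]].
  - exists a; split; [apply r_refl | split; [apply r_step, H | left; reflexivity]].
Qed.

Section DirectedLimit.
Variables (N I T : Type) (ltN : N -> N -> Prop) (ltI : I -> I -> Prop)
  (mu : N) (B : N -> I -> T -> Prop) (xi : N -> I -> Prop).

Local Notation leN := (clos_refl N ltN).
Local Notation BM := (lim_B ltN mu B xi).
Local Notation XM := (lim_xi ltN mu xi).

Hypothesis ltN_trans : forall a b c, ltN a b -> ltN b c -> ltN a c.
Hypothesis directed : forall a b, ltN a mu -> ltN b mu ->
  exists m, ltN m mu /\ leN a m /\ leN b m.
Hypothesis chain : forall nu nu', ltN nu nu' -> ltN nu' mu ->
  benum_le (B nu) (xi nu) (B nu') (xi nu').

Lemma leN_trans a b c : leN a b -> leN b c -> leN a c.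
Proof.
  intros Hab Hbc; destruct Hbc as [c Hbc|]; [|exact Hab].
  destruct Hab as [b Hab|]; apply r_step; eauto.
Qed.

Lemma lt_leN_trans a b c : ltN a b -> leN b c -> ltN a c.
Proof. intros Hab [c' Hbc|]; eauto. Qed.

Lemma chain_le a b : leN a b -> ltN b mu -> benum_le (B a) (xi a) (B b) (xi b).
Proof. intros [b' Hab|] Hb; [apply chain; auto | apply benum_le_refl]. Qed.

Definition eventually (P : N -> Prop) : Prop :=
  exists nu0, ltN nu0 mu /\ forall nu, leN nu0 nu -> ltN nu mu -> P nu.

Lemma eventually_le nu : ltN nu mu -> eventually (leN nu).
Proof. intros Hnu; exists nu; auto. Qed.

Lemma eventually_and (P Q : N -> Prop) :
  eventually P -> eventually Q -> eventually (fun nu => P nu /\ Q nu).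
Proof.
  intros [p [Hp HP]] [q [Hq HQ]].
  destruct (directed Hp Hq) as [m [Hm [Hpm Hqm]]].
  exists m; split; [exact Hm|].
  intros nu Hmnu Hnu; split; [apply HP | apply HQ]; eauto using leN_trans.
Qed.

Lemma eventually_witness (P : N -> Prop) : eventually P -> exists nu, ltN nu mu /\ P nu.
Proof. intros [nu0 [H0 HP]]; exists nu0; split; [|apply HP]; auto using r_refl. Qed.

Lemma lim_B_intro nu i x : ltN nu mu -> xi nu i -> B nu i x -> BM i x.
Proof. intros; exists nu; auto. Qed.

Lemma lim_B_eventually i x : BM i x -> eventually (fun nu => xi nu i /\ B nu i x).
Proof.
  intros [nu0 [H0 [Hi Hx]]]; exists nu0; split; [exact H0|].
  intros nu Hle Hnu; split;
    [eapply benum_le_index | eapply benum_le_mem]; eauto using chain_le.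
Qed.

Lemma lim_carrier_eventually x :
  carrier BM XM x -> eventually (fun nu => carrier (B nu) (xi nu) x).
Proof.
  intros [i [_ Hx]].
  destruct (lim_B_eventually Hx) as [nu0 [H0 Hev]]; exists nu0; split; [exact H0|].
  intros nu Hle Hnu; exists i; apply Hev; auto.
Qed.

Lemma lim_B_restrict nu i x : ltN nu mu -> xi nu i -> BM i x ->
  carrier (B nu) (xi nu) x -> B nu i x.
Proof.
  intros Hnu Hi Hx Hc.
  destruct (eventually_witness (eventually_and (eventually_le Hnu) (lim_B_eventually Hx)))
    as [m [Hm [Hle [_ Hmx]]]].
  exact (benum_le_restrict (chain_le Hle Hm) Hi Hmx Hc).
Qed.

Lemma lim_B_subset nu i j : ltN nu mu -> xi nu i -> xi nu j ->
  (forall x, B nu i x -> B nu j x) -> forall x, BM i x -> BM j x.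
Proof.
  intros Hnu Hi Hj Hsub x Hx.
  destruct (eventually_witness (eventually_and (eventually_le Hnu) (lim_B_eventually Hx)))
    as [m [Hm [Hle [_ Hmx]]]].
  apply (lim_B_intro Hm (benum_le_index (chain_le Hle Hm) Hj)).
  exact (benum_le_subset (chain_le Hle Hm) Hi Hj Hsub Hmx).
Qed.

Lemma lim_B_disjoint nu i j : ltN nu mu -> xi nu i -> xi nu j ->
  (forall x, ~ (B nu i x /\ B nu j x)) -> forall x, ~ (BM i x /\ BM j x).
Proof.
  intros Hnu Hi Hj Hdisj x [Hix Hjx].
  destruct (eventually_witness (eventually_and (eventually_le Hnu)
              (eventually_and (lim_B_eventually Hix) (lim_B_eventually Hjx))))
    as [m [Hm [Hle [[_ Hmi] [_ Hmj]]]]].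
  exact (benum_le_disjoint (chain_le Hle Hm) Hi Hj Hdisj (conj Hmi Hmj)).
Qed.

Lemma benum_le_lim nu : ltN nu mu -> benum_le (B nu) (xi nu) BM XM.
Proof.
  intros Hnu.
  assert (Hcarrier : forall x, carrier (B nu) (xi nu) x -> carrier BM XM x).
  { intros x [i [Hi Hx]]; exists i; split; [exists nu | apply (lim_B_intro Hnu)]; auto. }
  split; [exact Hcarrier | split; [|split; [|split]]].
  - intros i Hi; exists nu; auto.
  - intros i Hi x; split.
    + intros Hx; split; [apply (lim_B_intro Hnu) | exists i]; auto.
    + intros [Hx Hc]; exact (lim_B_restrict Hnu Hi Hx Hc).
  - intros i j Hi Hj; split; [apply lim_B_subset; auto|].
    intros Hsub x Hx; apply (lim_B_restrict Hnu Hj); [|exists i; auto].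
    apply Hsub, (lim_B_intro Hnu Hi Hx).
  - intros i j Hi Hj; split; [apply lim_B_disjoint; auto|].
    intros Hdisj x [Hix Hjx].
    exact (Hdisj x (conj (lim_B_intro Hnu Hi Hix) (lim_B_intro Hnu Hj Hjx))).
Qed.

Section BaseEnumerations.
Hypothesis base_enum : forall nu, ltN nu mu -> is_base_enum ltI (B nu) (xi nu).

Lemma lim_refines_intersections : refines_intersections BM XM.
Proof.
  intros i j x _ _ Hix Hjx.
  destruct (eventually_witness
              (eventually_and (lim_B_eventually Hix) (lim_B_eventually Hjx)))
    as [m [Hm [[Hi Hmi] [Hj Hmj]]]].
  destruct (proj1 (proj2 (proj1 (is_base_enum_iff _ _ _) (base_enum Hm)))
              i j x Hi Hj Hmi Hmj) as [k [Hk [Hkx Hkij]]].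
  exists k; split; [exists m; auto | split; [exact (lim_B_intro Hm Hk Hkx)|]].
  intros y Hy; split; [eapply (lim_B_subset Hm Hk Hi) | eapply (lim_B_subset Hm Hk Hj)];
    eauto; apply Hkij.
Qed.

Lemma lim_compl_gen_open i :
  XM i -> gen_open BM XM (fun x => carrier BM XM x /\ ~ BM i x).
Proof.
  intros [nu [Hnu Hi]]; split; [intros x [Hx _]; exact Hx|].
  intros x [Hx Hnx].
  destruct (eventually_witness (eventually_and (eventually_le Hnu)
              (lim_carrier_eventually Hx))) as [m [Hm [Hle Hmx]]].
  assert (Hmi : xi m i) by exact (benum_le_index (chain_le Hle Hm) Hi).
  assert (Hnmx : ~ B m i x) by (intros Hb; exact (Hnx (lim_B_intro Hm Hmi Hb))).
  destruct (proj2 (proj2 (proj1 (is_base_enum_iff _ _ _) (base_enum Hm))) i Hmi)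
    as [_ Hcompl].
  destruct (Hcompl x (conj Hmx Hnmx)) as [k [Hk [Hkx Hki]]].
  exists k; split; [exists m; auto | split; [exact (lim_B_intro Hm Hk Hkx)|]].
  intros y Hy; split; [exists k; split; [exists m|]; auto|].
  intros Hiy; apply (lim_B_disjoint Hm Hk Hmi) with (x := y); auto.
  intros z [Hkz Hiz]; exact (proj2 (Hki z Hkz) Hiz).
Qed.

Lemma lim_base_enum : is_base_enum ltI BM XM.
Proof.
  apply is_base_enum_iff; split; [|split].
  - intros i j Hji [nu [Hnu Hi]]; exists nu; split; [exact Hnu|].
    exact (proj1 (base_enum Hnu) i j Hji Hi).
  - exact lim_refines_intersections.
  - exact lim_compl_gen_open.
Qed.

End BaseEnumerations.

Lemma lim_hausdorff :
  (forall nu, ltN nu mu ->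
     exists nu', (nu' = nu \/ ltN nu nu') /\ ltN nu' mu /\ hausdorff (B nu') (xi nu')) ->
  hausdorff BM XM.
Proof.
  intros Hcofinal x y Hx Hy Hxy.
  destruct (eventually_witness (eventually_and (lim_carrier_eventually Hx)
              (lim_carrier_eventually Hy))) as [m [Hm [Hmx Hmy]]].
  destruct (Hcofinal m Hm) as [n [Hmn [Hn Hhaus]]].
  assert (Hle : leN m n) by (destruct Hmn as [<- | Hlt]; constructor; auto).
  destruct (Hhaus x y (benum_le_carrier (chain_le Hle Hn) Hmx)
                      (benum_le_carrier (chain_le Hle Hn) Hmy) Hxy)
    as [U [V [[_ HU] [[_ HV] [HUx [HVy HUV]]]]]].
  destruct (HU x HUx) as [k [Hk [Hkx HkU]]].
  destruct (HV y HVy) as [l [Hl [Hly HlV]]].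
  exists (BM k), (BM l).
  split; [apply gen_open_B; exists n; auto|].
  split; [apply gen_open_B; exists n; auto|].
  split; [exact (lim_B_intro Hn Hk Hkx)|].
  split; [exact (lim_B_intro Hn Hl Hly)|].
  apply (lim_B_disjoint Hn Hk Hl).
  intros z [Hkz Hlz]; exact (HUV z (conj (HkU z Hkz) (HlV z Hlz))).
Qed.

Lemma lim_in_closure sigma a (A : T -> Prop) :
  ltN sigma mu -> (exists nu, ltN sigma nu /\ ltN nu mu) ->
  carrier (B sigma) (xi sigma) a ->
  (forall nu, ltN sigma nu -> ltN nu mu -> in_closure (B nu) (xi nu) A a) ->
  in_closure BM XM A a.
Proof.
  intros Hsigma [nu [Hsigma_nu Hnu]] Ha Hcl.
  split; [exact (benum_le_carrier (benum_le_lim Hsigma) Ha)|].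
  intros U [_ HU] HUa.
  destruct (HU a HUa) as [i [_ [Hia HiU]]].
  destruct (eventually_witness (eventually_and (eventually_le Hnu)
              (lim_B_eventually Hia))) as [m [Hm [Hle [Hmi Hma]]]].
  assert (Hsigma_m : ltN sigma m) by exact (lt_leN_trans Hsigma_nu Hle).
  destruct (proj2 (Hcl m Hsigma_m Hm) (B m i) (gen_open_B _ _ _ Hmi) Hma)
    as [z [Hz HAz]].
  exists z; split; [apply HiU, (lim_B_intro Hm Hmi Hz) | exact HAz].
Qed.

End DirectedLimit.

Theorem lemma2p2 (N I T : Type) (ltN : N -> N -> Prop) (ltI : I -> I -> Prop)
  (mu : N) (B : N -> I -> T -> Prop) (xi : N -> I -> Prop) :
  is_wellorder ltN -> is_wellorder ltI -> is_limit ltN mu ->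
  (forall nu, ltN nu mu -> is_base_enum ltI (B nu) (xi nu)) ->
  (forall nu nu', ltN nu nu' -> ltN nu' mu ->
     benum_le (B nu) (xi nu) (B nu') (xi nu')) ->
  is_base_enum ltI (lim_B ltN mu B xi) (lim_xi ltN mu xi) /\
  (forall nu, ltN nu mu ->
     benum_le (B nu) (xi nu) (lim_B ltN mu B xi) (lim_xi ltN mu xi)) /\
  ((forall nu, ltN nu mu ->
      exists nu', (nu' = nu \/ ltN nu nu') /\ ltN nu' mu /\ hausdorff (B nu') (xi nu')) ->
   hausdorff (lim_B ltN mu B xi) (lim_xi ltN mu xi)) /\
  (forall (sigma : N) (a : T) (A : T -> Prop),
     ltN sigma mu -> carrier (B sigma) (xi sigma) a ->
     (forall x, A x -> carrier (B sigma) (xi sigma) x) ->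
     (forall nu, ltN sigma nu -> ltN nu mu -> in_closure (B nu) (xi nu) A a) ->
     in_closure (lim_B ltN mu B xi) (lim_xi ltN mu xi) A a).
Proof.
  intros [_ [Htrans [Htri _]]] _ [_ Hsucc] Hbase Hchain.
  assert (Hdirected : forall a b, ltN a mu -> ltN b mu ->
            exists m, ltN m mu /\ clos_refl N ltN a m /\ clos_refl N ltN b m).
  { intros a b Ha Hb.
    destruct (trichotomous_directed ltN Htri a b) as [m [Ham [Hbm [-> | ->]]]]; eauto. }
  split; [apply lim_base_enum; assumption|].
  split; [intros nu Hnu; apply benum_le_lim; assumption|].
  split; [apply lim_hausdorff; assumption|].
  intros sigma a A Hsigma Ha _ Hcl.
  apply lim_in_closure with (sigma := sigma); auto.
Qed.
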